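(* (1) For every $\theta\in\mathbb{C}^4$, the projective surface $\overline{\mathcal{S}}(\theta)$ is smooth in a neighborhood of $L=L_1\cup L_2\cup L_3$. (2) If $\theta=\mathrm{rh}(\kappa)$ with $\kappa\in\mathcal{K}$, then $\overline{\mathcal{S}}(\theta)$ is smooth everywhere if and only if $\kappa\in\mathcal{K}\setminus\mathrm{Wall}$.
   Context: For $\theta=(\theta_1,\theta_2,\theta_3,\theta_4)\in\mathbb{C}^4$, $\overline{\mathcal{S}}(\theta)\subset\mathbb{P}^3$ is the cubic surface $X_1X_2X_3+X_0(X_1^2+X_2^2+X_3^2)-X_0^2(\theta_1X_1+\theta_2X_2+\theta_3X_3)+\theta_4X_0^3=0$, the closure of the affine surface $x_1x_2x_3+x_1^2+x_2^2+x_3^2-\theta_1x_1-\theta_2x_2-\theta_3x_3+\theta_4=0$ via $x\mapsto[1:x_1:x_2:x_3]$; $L_i=\{X_0=X_i=0\}$ for $i=1,2,3$. $\mathcal{K}=\{\kappa\in\mathbb{C}^5:2\kappa_0+\kappa_1+\kappa_2+\kappa_3+\kappa_4=1\}$; $\mathrm{Wall}$ is the union of the hyperplanes $\kappa_i=m$ ($i=1,\dots,4$, $m\in\mathbb{Z}$) and $\kappa_1\pm\kappa_2\pm\kappa_3\pm\kappa_4=2m+1$ ($m\in\mathbb{Z}$). The map $\mathrm{rh}:\mathcal{K}\to\mathbb{C}^4$ is defined by $a_i=2\cos\pi\kappa_i$ ($i=1,2,3$), $a_4=-2\cos\pi\kappa_4$, $\theta_i=a_ia_4+a_ja_k$ for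 $\{i,j,k\}=\{1,2,3\}$, and $\theta_4=a_1a_2a_3a_4+a_1^2+a_2^2+a_3^2+a_4^2-4$. *)

From mathcomp Require Import all_boot all_order all_algebra.
From mathcomp Require Import complex.
From mathcomp Require Import reals sequences trigo.
From mathcomp Require Import mpoly.
Set Implicit Arguments.
Unset Strict Implicit.
Unset Printing Implicit Defensive.
Import GRing.Theory Num.Theory.
Local Open Scope ring_scope.

Section Defs.
Variable R : realType.
Local Notation C := (R[i]).

Definition ccos (z : C) : C :=
  let x := complex.Re z in let y := complex.Im z in
  let ch := (expR y + expR (- y)) / 2 in
  let sh := (expR y - expR (- y)) / 2 in
  Complex (cos x * ch) (- (sin x * sh)).

Definition Xc (j : nat) : {mpoly C[4]} := 'X_(inord j).

Definition Fcubic (t1 t2 t3 t4 : C) : {mpoly C[4]} :=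
  Xc 1 * Xc 2 * Xc 3
  + Xc 0 * (Xc 1 ^+ 2 + Xc 2 ^+ 2 + Xc 3 ^+ 2)
  - Xc 0 ^+ 2 * (t1%:MP * Xc 1 + t2%:MP * Xc 2 + t3%:MP * Xc 3)
  + t4%:MP * Xc 0 ^+ 3.

(* x : 'I_4 -> C, x <> 0, represents the point [x0:x1:x2:x3] of P^3.
   It is a singular point of the projective surface {F = 0} iff F and all
   its partial derivatives vanish at x (a scaling-invariant condition). *)
Definition singular_point (t1 t2 t3 t4 : C) (x : 'I_4 -> C) : Prop :=
  x <> (fun=> 0) /\ (Fcubic t1 t2 t3 t4).@[x] = 0 /\
  forall j : 'I_4, (mderiv j (Fcubic t1 t2 t3 t4)).@[x] = 0.

Definition smooth_everywhere (t1 t2 t3 t4 : C) : Prop :=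
  forall x : 'I_4 -> C, ~ singular_point t1 t2 t3 t4 x.

Definition on_L (x : 'I_4 -> C) : Prop :=
  x (inord 0) = 0 /\
  (x (inord 1) = 0 \/ x (inord 2) = 0 \/ x (inord 3) = 0).

(* Smooth in a neighbourhood of L: since the singular locus is Zariski
   closed, this is equivalent to having no singular point on L. *)
Definition smooth_near_L (t1 t2 t3 t4 : C) : Prop :=
  forall x : 'I_4 -> C, on_L x -> ~ singular_point t1 t2 t3 t4 x.

Definition in_K (k0 k1 k2 k3 k4 : C) : Prop :=
  2 * k0 + k1 + k2 + k3 + k4 = 1.

Definition is_int (z : C) : Prop := exists m : int, z = m%:~R.

Definition in_Wall (k1 k2 k3 k4 : C) : Prop :=
  is_int k1 \/ is_int k2 \/ is_int k3 \/ is_int k4 \/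
  exists (s2 s3 s4 : bool) (m : int),
    k1 + (-1) ^+ s2 * k2 + (-1) ^+ s3 * k3 + (-1) ^+ s4 * k4
      = (2 * m + 1)%:~R.

Definition rh_a (k : C) : C := 2 * ccos (Complex (pi : R) 0 * k).

Definition rh (k1 k2 k3 k4 : C) : C * C * C * C :=
  let a1 := rh_a k1 in let a2 := rh_a k2 in let a3 := rh_a k3 in
  let a4 := - rh_a k4 in
  (a1 * a4 + a2 * a3, a2 * a4 + a1 * a3, a3 * a4 + a1 * a2,
   a1 * a2 * a3 * a4 + a1 ^+ 2 + a2 ^+ 2 + a3 ^+ 2 + a4 ^+ 2 - 4).

End Defs.

From mathcomp Require Import all_boot all_order all_algebra.
From mathcomp Require Import complex.
From mathcomp Require Import reals sequences exp trigo.
From mathcomp Require Import mpoly.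
From mathcomp Require Import ring lra.
Set Implicit Arguments.
Unset Strict Implicit.
Unset Printing Implicit Defensive.
Import Order.TTheory GRing.Theory Num.Theory.
Local Open Scope ring_scope.

(* At infinity the partial derivatives force X_1 = X_2 = X_3 = 0, so every
   singular point is affine, and y is a singular point of the affine surface
   exactly when theta = critical_theta y.  For theta = rh kappa write
   a_i = s_i + s_i^-1 with s_i = e^(i pi kappa_i) (and s_4 = -e^(i pi kappa_4)).
   Eliminating y_1, y_3 shows that y_2 is a double root of
   fricke a_1 a_3 * fricke a_2 a_4, whose roots are the u + u^-1 with
   u = s_1 s_3^(+-1), resp. u = s_2 s_4^(+-1).  A double root of one factor
   forces some s_i^2 = 1, i.e. kappa_i in Z; a common root forces
   s_1 s_2^(+-1) s_3^(+-1) s_4^(+-1) = 1, i.e. an odd signed sum of the kappa_i.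
   Conversely every wall carries an explicit singular point. *)

Lemma periodicz (U V : zmodType) (f : U -> V) (T : U) :
  periodic f T -> forall (k : int) (a : U), f (a + T *~ k) = f a.
Proof.
move=> fT [] n a; first by rewrite -pmulrn periodicn.
by rewrite NegzE mulrNz -pmulrn -[LHS](periodicn fT n.+1) subrK.
Qed.

Lemma mderivXU (n : nat) (K : nzRingType) (i j : 'I_n) :
  mderiv i ('X_j : {mpoly K[n]}) = (j == i)%:R%:MP.
Proof.
rewrite mderivX mnm1E; case: eqP => [->|_]; last by rewrite scale0r.
have -> : (U_(i) - U_(i) = 0)%MM by apply/mnmP => k; rewrite !mnmE subnn.
by rewrite mpolyX0 scale1r.
Qed.

Lemma ord4_ind (P : 'I_4 -> Prop) :
  P (inord 0) -> P (inord 1) -> P (inord 2) -> P (inord 3) -> forall i, P i.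
Proof.
move=> P0 P1 P2 P3 i; rewrite -(inord_val i).
by case: i => [[|[|[|[|n]]]] hn].
Qed.

Lemma mulf_eq0_double_root (K : idomainType) (p q dp dq : K) :
  p * q = 0 -> dp * q + p * dq = 0 ->
  [\/ p = 0 /\ q = 0, p = 0 /\ dp = 0 | q = 0 /\ dq = 0].
Proof.
move/eqP; rewrite mulf_eq0 => /orP[] /eqP ->;
  rewrite ?(mul0r, mulr0, addr0, add0r) => /eqP;
  rewrite mulf_eq0 => /orP[] /eqP;
  by [constructor 1 | constructor 2 | constructor 1 | constructor 3].
Qed.

Lemma pairwise_mul_sqr_sum_eq0 (K : idomainType) (a b c : K) :
  a * b = 0 -> a * c = 0 -> b * c = 0 -> a ^+ 2 + b ^+ 2 + c ^+ 2 = 0 ->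
  [/\ a = 0, b = 0 & c = 0].
Proof.
have vanish (u v w : K) :
    u * v = 0 -> u * w = 0 -> u ^+ 2 + v ^+ 2 + w ^+ 2 = 0 -> u = 0.
  move=> uv uw S; have : u ^+ 4 = 0.
    have -> : u ^+ 4 = u ^+ 2 * (u ^+ 2 + v ^+ 2 + w ^+ 2)
                       - (u * v) ^+ 2 - (u * w) ^+ 2 by ring.
    by rewrite S uv uw; ring.
  by move/eqP; rewrite expf_eq0 => /eqP.
move=> ab ac bc s; split; first exact: vanish ab ac s.
  by apply: (vanish b a c); [rewrite mulrC | | rewrite -s; ring].
by apply: (vanish c a b); [rewrite mulrC | rewrite mulrC | rewrite -s; ring].
Qed.

Section TraceAlgebra.
Variable F : fieldType.

(* At a singular point y of the affine surface, the partial derivatives in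
   y_1, y_2, y_3 determine theta_1, theta_2, theta_3, and the equation itself
   then determines theta_4. *)
Definition critical_theta (y1 y2 y3 : F) : F * F * F * F :=
  (y2 * y3 + 2 * y1, y1 * y3 + 2 * y2, y1 * y2 + 2 * y3,
   2 * y1 * y2 * y3 + y1 ^+ 2 + y2 ^+ 2 + y3 ^+ 2).

Definition theta_of (a1 a2 a3 a4 : F) : F * F * F * F :=
  (a1 * a4 + a2 * a3, a2 * a4 + a1 * a3, a3 * a4 + a1 * a2,
   a1 * a2 * a3 * a4 + a1 ^+ 2 + a2 ^+ 2 + a3 ^+ 2 + a4 ^+ 2 - 4).

(* tr [A, B] - 2 for A, B in SL_2 with traces a, b and tr (A B) = r. *)
Definition fricke (a b r : F) : F := r ^+ 2 - a * b * r + a ^+ 2 + b ^+ 2 - 4.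

(* Eliminating y_1, y_3 from [t = critical_theta y1 y2 y3] leaves
   [quartic t y2 = 0]; [quartic_deriv t] is the derivative of [quartic t]. *)
Definition quartic (t : F * F * F * F) (r : F) : F :=
  let '(t1, t2, t3, t4) := t in
  r ^+ 4 - t2 * r ^+ 3 + (t4 - 4) * r ^+ 2 - (t1 * t3 - 4 * t2) * r
  + t1 ^+ 2 + t3 ^+ 2 - 4 * t4.

Definition quartic_deriv (t : F * F * F * F) (r : F) : F :=
  let '(t1, t2, t3, t4) := t in
  4 * r ^+ 3 - 3 * t2 * r ^+ 2 + 2 * (t4 - 4) * r - (t1 * t3 - 4 * t2).

Lemma quartic_theta_of (a1 a2 a3 a4 r : F) :
  quartic (theta_of a1 a2 a3 a4) r = fricke a1 a3 r * fricke a2 a4 r.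
Proof. rewrite /quartic /fricke /=; ring. Qed.

Lemma quartic_deriv_theta_of (a1 a2 a3 a4 r : F) :
  quartic_deriv (theta_of a1 a2 a3 a4) r =
  (2 * r - a1 * a3) * fricke a2 a4 r + fricke a1 a3 r * (2 * r - a2 * a4).
Proof. rewrite /quartic_deriv /fricke /=; ring. Qed.

Lemma quartic_critical (y1 y2 y3 : F) :
  quartic (critical_theta y1 y2 y3) y2 = 0.
Proof. rewrite /quartic /=; ring. Qed.

Lemma quartic_deriv_critical (y1 y2 y3 : F) :
  quartic_deriv (critical_theta y1 y2 y3) y2 = 0.
Proof. rewrite /quartic_deriv /=; ring. Qed.

Lemma fricke_discriminant (a b r : F) :
  (2 * r - a * b) ^+ 2 - 4 * fricke a b r = (a ^+ 2 - 4) * (b ^+ 2 - 4).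
Proof. rewrite /fricke; ring. Qed.

Definition inv_if (e : bool) (s : F) : F := if e then s^-1 else s.

Lemma inv_if_neq0 (e : bool) (s : F) : s != 0 -> inv_if e s != 0.
Proof. by case: e; rewrite /= ?invr_eq0. Qed.

Lemma inv_ifN (e : bool) (s : F) : inv_if e (- s) = - inv_if e s.
Proof. by case: e; rewrite /= ?invrN. Qed.

Lemma inv_if_negb (e : bool) (s : F) : inv_if (~~ e) s = (inv_if e s)^-1.
Proof. by case: e; rewrite /= ?invrK. Qed.

Lemma add_inv_inv_if (e : bool) (s : F) :
  inv_if e s + (inv_if e s)^-1 = s + s^-1.
Proof. by case: e; rewrite /= ?invrK addrC. Qed.

(* The wall in the coordinates s_i = e^(i pi kappa_i), s_4 = - e^(i pi kappa_4)
   (see [in_WallE]). *)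
Definition in_expWall (s1 s2 s3 s4 : F) : Prop :=
  s1 ^+ 2 = 1 \/ s2 ^+ 2 = 1 \/ s3 ^+ 2 = 1 \/ s4 ^+ 2 = 1 \/
  exists e2 e3 e4 : bool,
    s1 * inv_if e2 s2 * inv_if e3 s3 * inv_if e4 s4 = 1.

Lemma add_inv_inj (u w : F) : u != 0 -> w != 0 ->
  u + u^-1 = w + w^-1 -> u = w \/ u * w = 1.
Proof.
move=> u0 w0 E; have : (u - w) * (u * w - 1) = 0.
  have -> : (u - w) * (u * w - 1) = u * w * (u + u^-1 - (w + w^-1)).
    by field; rewrite u0 w0.
  by rewrite E subrr mulr0.
move/eqP; rewrite mulf_eq0 !subr_eq0 => /orP[] /eqP; tauto.
Qed.

Lemma sqr_add_inv_eq4 (s : F) : s != 0 -> (s + s^-1) ^+ 2 = 4 -> s ^+ 2 = 1.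
Proof.
move=> s0 E; have : (s - s^-1) ^+ 2 = 0.
  have -> : (s - s^-1) ^+ 2 = (s + s^-1) ^+ 2 - 4 by field.
  by rewrite E subrr.
by move/eqP; rewrite expf_eq0 /= subr_eq0 => /eqP sV; rewrite expr2 {2}sV mulfV.
Qed.

Lemma fricke_add_inv (s t r : F) : s != 0 -> t != 0 ->
  fricke (s + s^-1) (t + t^-1) r =
  (r - (s * t + (s * t)^-1)) * (r - (s / t + (s / t)^-1)).
Proof. by move=> s0 t0; rewrite /fricke; field; rewrite s0 t0. Qed.

Lemma fricke_root (s t r : F) : s != 0 -> t != 0 ->
  fricke (s + s^-1) (t + t^-1) r = 0 ->
  exists e, r = s * inv_if e t + (s * inv_if e t)^-1.
Proof.
move=> s0 t0; rewrite fricke_add_inv // => /eqP; rewrite mulf_eq0 !subr_eq0.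
by case/orP=> /eqP ->; [exists false | exists true].
Qed.

Lemma fricke_double_root (s t r : F) : s != 0 -> t != 0 ->
  fricke (s + s^-1) (t + t^-1) r = 0 ->
  2 * r - (s + s^-1) * (t + t^-1) = 0 -> s ^+ 2 = 1 \/ t ^+ 2 = 1.
Proof.
move=> s0 t0 p0 dp0; have /eqP := fricke_discriminant (s + s^-1) (t + t^-1) r.
rewrite p0 dp0 expr0n mulr0 subr0 eq_sym mulf_eq0 !subr_eq0.
by case/orP=> /eqP /sqr_add_inv_eq4 ->; tauto.
Qed.

Lemma fricke_common_root (s1 s2 s3 s4 r : F) :
  s1 != 0 -> s2 != 0 -> s3 != 0 -> s4 != 0 ->
  fricke (s1 + s1^-1) (s3 + s3^-1) r = 0 ->
  fricke (s2 + s2^-1) (s4 + s4^-1) r = 0 ->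
  exists e2 e3 e4 : bool, s1 * inv_if e2 s2 * inv_if e3 s3 * inv_if e4 s4 = 1.
Proof.
move=> n1 n2 n3 n4 /(fricke_root n1 n3) [e3 ->] /(fricke_root n2 n4) [e4].
have u0 : s1 * inv_if e3 s3 != 0 by rewrite mulf_neq0 ?inv_if_neq0.
have w0 : s2 * inv_if e4 s4 != 0 by rewrite mulf_neq0 ?inv_if_neq0.
case/(add_inv_inj u0 w0) => E.
- exists true, e3, (~~ e4); rewrite /= inv_if_negb.
  transitivity ((s1 * inv_if e3 s3) / (s2 * inv_if e4 s4)).
    by field; rewrite n2 inv_if_neq0.
  by rewrite E divff.
- by exists false, e3, e4; rewrite /= -E; ring.
Qed.

Lemma critical_theta_expWall (s1 s2 s3 s4 y1 y2 y3 : F) :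
  s1 != 0 -> s2 != 0 -> s3 != 0 -> s4 != 0 ->
  theta_of (s1 + s1^-1) (s2 + s2^-1) (s3 + s3^-1) (s4 + s4^-1) =
    critical_theta y1 y2 y3 ->
  in_expWall s1 s2 s3 s4.
Proof.
move=> n1 n2 n3 n4 E.
have := quartic_critical y1 y2 y3; have := quartic_deriv_critical y1 y2 y3.
rewrite -E quartic_theta_of quartic_deriv_theta_of => dpq pq.
case: (mulf_eq0_double_root pq dpq) => [[p0 q0] | [p0 dp0] | [q0 dq0]].
- by do 4!right; exact: fricke_common_root p0 q0.
- by have := fricke_double_root n1 n3 p0 dp0; rewrite /in_expWall; tauto.
- by have := fricke_double_root n2 n4 q0 dq0; rewrite /in_expWall; tauto.
Qed.

Lemma theta_of_Klein (a1 a2 a3 a4 : F) :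
  [/\ theta_of a2 a1 a4 a3 = theta_of a1 a2 a3 a4,
      theta_of a3 a4 a1 a2 = theta_of a1 a2 a3 a4 &
      theta_of a4 a3 a2 a1 = theta_of a1 a2 a3 a4].
Proof. by rewrite /theta_of; split; congr (_, _, _, _); ring. Qed.

Lemma theta_of_sqr1 (e a2 a3 a4 : F) : e ^+ 2 = 1 ->
  theta_of (e + e^-1) a2 a3 a4 = critical_theta (e * a4) (e * a3) (e * a2).
Proof.
move/eqP; rewrite sqrf_eq1 => /orP[] /eqP ->;
  by rewrite ?invr1 ?invrN1 /theta_of /critical_theta; congr (_, _, _, _); ring.
Qed.

Lemma theta_of_prod1 (u1 u2 u3 u4 : F) : u1 != 0 -> u2 != 0 -> u3 != 0 ->
  u1 * u2 * u3 * u4 = 1 ->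
  theta_of (u1 + u1^-1) (u2 + u2^-1) (u3 + u3^-1) (u4 + u4^-1) =
  critical_theta (u2 * u3 + (u2 * u3)^-1) (u1 * u3 + (u1 * u3)^-1)
    (u1 * u2 + (u1 * u2)^-1).
Proof.
move=> n1 n2 n3 E.
have n123 : u1 * u2 * u3 != 0 by rewrite !mulf_neq0.
have -> : u4 = (u1 * u2 * u3)^-1 by apply: (mulfI n123); rewrite E mulfV.
rewrite /theta_of /critical_theta; congr (_, _, _, _);
  by field; rewrite n1 n2 n3 oner_neq0.
Qed.

Lemma expWall_critical_theta (s1 s2 s3 s4 : F) :
  s1 != 0 -> s2 != 0 -> s3 != 0 -> s4 != 0 -> in_expWall s1 s2 s3 s4 ->
  exists y1 y2 y3,
    theta_of (s1 + s1^-1) (s2 + s2^-1) (s3 + s3^-1) (s4 + s4^-1) =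
      critical_theta y1 y2 y3.
Proof.
move=> n1 n2 n3 n4.
have [K2 K3 K4] :=
  theta_of_Klein (s1 + s1^-1) (s2 + s2^-1) (s3 + s3^-1) (s4 + s4^-1).
case=> [e1|[e2|[e3|[e4|[b2 [b3 [b4 E]]]]]]].
- by rewrite theta_of_sqr1 //; do 3!eexists.
- by rewrite -K2 theta_of_sqr1 //; do 3!eexists.
- by rewrite -K3 theta_of_sqr1 //; do 3!eexists.
- by rewrite -K4 theta_of_sqr1 //; do 3!eexists.
rewrite -(add_inv_inv_if b2 s2) -(add_inv_inv_if b3 s3) -(add_inv_inv_if b4 s4).
by rewrite theta_of_prod1 ?inv_if_neq0 //; do 3!eexists.
Qed.

Lemma critical_theta_expWallE (s1 s2 s3 s4 : F) :
  s1 != 0 -> s2 != 0 -> s3 != 0 -> s4 != 0 ->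
  (exists y1 y2 y3,
    theta_of (s1 + s1^-1) (s2 + s2^-1) (s3 + s3^-1) (s4 + s4^-1) =
      critical_theta y1 y2 y3) <-> in_expWall s1 s2 s3 s4.
Proof.
move=> n1 n2 n3 n4; split; last exact: expWall_critical_theta.
by case=> y1 [y2 [y3]]; apply: critical_theta_expWall.
Qed.

End TraceAlgebra.

Section ExpIPi.
Variable R : realType.
Local Notation C := R[i].

Lemma cos_pi_eq1 (x : R) :
  cos (pi * x) = 1 -> exists k : int, x = (2 * k)%:~R.
Proof.
(* With y := x - 2 floor (x / 2) in [0, 2), sin (pi y / 2) = 0 forces y = 0. *)
move=> c1; set k := Num.floor (x / 2); exists k.
have kl : k%:~R <= x / 2 := Num.Theory.floor_le _.
have ku : x / 2 < k%:~R + 1.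
  by rewrite -[1]/(1%:~R) -intrD Num.Theory.floorD1_gt.
set y := x - 2 * k%:~R.
suff /eqP : y = 0 by rewrite subr_eq0 intrM => /eqP.
have : sin (pi * y / 2) ^+ 2 = 0.
  have : cos ((pi * y / 2) *+ 2) = 1.
    rewrite -mulr_natr divfK ?pnatr_eq0 // mulrBr mulrA mulr_natr mulrzr.
    by rewrite -mulrNz (periodicz (@cosD2pi R)).
  by rewrite cos_mulr2n cos2sin2 mulr2n => h; lra.
move/eqP; rewrite expf_eq0 /= => /eqP s0; apply/eqP; rewrite eq_le.
have -> : 0 <= y by rewrite /y; lra.
rewrite andbT leNgt; apply/negP => yp.
have : 0 < sin (pi * y / 2).
  apply: sin_gt0_pi; have := pi_gt0 R; rewrite /y in yp *; nra.
by rewrite s0 ltxx.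
Qed.

Definition exp_ipi (z : C) : C :=
  let r := expR (- (pi * complex.Im z)) in
  Complex (r * cos (pi * complex.Re z)) (r * sin (pi * complex.Re z)).

Lemma exp_ipiD (z w : C) : exp_ipi (z + w) = exp_ipi z * exp_ipi w.
Proof.
case: z => a b; case: w => c d; rewrite /exp_ipi /=; simpc.
by congr Complex; rewrite !mulrDr opprD expRD ?cosD ?sinD; ring.
Qed.

Lemma exp_ipi0 : exp_ipi 0 = 1.
Proof. by rewrite /exp_ipi /= !mulr0 oppr0 expR0 cos0 sin0 mulr1 mulr0. Qed.

Lemma exp_ipi1 : exp_ipi 1 = -1.
Proof.
rewrite /exp_ipi /= mulr0 oppr0 expR0 mulr1 cospi sinpi mul1r mulr0.
by apply/eqP; rewrite eq_complex /= oppr0 !eqxx.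
Qed.

Lemma exp_ipi_real (x : R) :
  exp_ipi (x%:C)%C = Complex (cos (pi * x)) (sin (pi * x)).
Proof. by rewrite /exp_ipi /= mulr0 oppr0 expR0 !mul1r. Qed.

Lemma exp_ipi_neq0 (z : C) : exp_ipi z != 0.
Proof.
apply/negP => /eqP z0; have := exp_ipiD z (- z).
by rewrite subrr exp_ipi0 z0 mul0r => /eqP; rewrite oner_eq0.
Qed.

Lemma exp_ipiN (z : C) : exp_ipi (- z) = (exp_ipi z)^-1.
Proof.
apply: (mulfI (exp_ipi_neq0 z)).
by rewrite -exp_ipiD subrr exp_ipi0 mulfV // exp_ipi_neq0.
Qed.

Lemma rh_aE (k : C) : rh_a k = exp_ipi k + (exp_ipi k)^-1.
Proof.
rewrite -exp_ipiN; case: k => a b; rewrite /rh_a /ccos /exp_ipi /=; simpc.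
rewrite !(mul0r, mulr0, subr0, addr0, mulrN, opprK, cosN, sinN) /=.
by congr Complex; field.
Qed.

Lemma exp_ipi_even (m : int) : exp_ipi (2 * m)%:~R = 1.
Proof.
rewrite -(rmorph_int (real_complex R)) exp_ipi_real intrM mulrA mulr_natr.
rewrite mulrzr -[_ *~ m]add0r.
by rewrite (periodicz (@cosD2pi R)) (periodicz (@sinD2pi R)) cos0 sin0.
Qed.

Lemma exp_ipi_eq1 (z : C) :
  exp_ipi z = 1 <-> exists m : int, z = (2 * m)%:~R.
Proof.
split=> [|[m ->]]; last exact: exp_ipi_even.
case: z => a b /eqP; rewrite eq_complex /= => /andP[/eqP c1 /eqP s0].
have r0 : 0 < expR (- (pi * b)) := expR_gt0 _.
have sin0 : sin (pi * a) = 0.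
  by move/eqP: s0; rewrite mulf_eq0 gt_eqF //= => /eqP.
have cos1 : cos (pi * a) = 1.
  have cpos : 0 < cos (pi * a) by rewrite -(pmulr_rgt0 _ r0) c1 ltr01.
  by rewrite -(gtr0_norm cpos) sin0cos1.
have b0 : b = 0.
  move: c1; rewrite cos1 mulr1 -expR0 => /expR_inj /eqP.
  by rewrite oppr_eq0 mulf_eq0 gt_eqF ?pi_gt0 //= => /eqP.
have [m am] := cos_pi_eq1 cos1.
by exists m; rewrite b0 am -(rmorph_int (real_complex R)).
Qed.

Lemma exp_ipi_eqN1 (z : C) :
  exp_ipi z = -1 <-> exists m : int, z = (2 * m + 1)%:~R.
Proof.
split=> [ez|[m ->]]; last by rewrite intrD exp_ipiD exp_ipi_even exp_ipi1 mul1r.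
have : exp_ipi (z - 1) = 1.
  by rewrite exp_ipiD exp_ipiN exp_ipi1 ez invrN1 mulrNN mulr1.
by case/exp_ipi_eq1=> m hm; exists m; rewrite intrD -hm subrK.
Qed.

Lemma exp_ipi_sqr_eq1 (z : C) : exp_ipi z ^+ 2 = 1 <-> is_int z.
Proof.
rewrite expr2 -exp_ipiD; split=> [/exp_ipi_eq1 [m hm]|[m ->]].
  exists m; apply/eqP; rewrite -subr_eq0.
  have : (z - m%:~R) *+ 2 == 0.
    have -> : (z - m%:~R) *+ 2 = z + z - (2 * m)%:~R by rewrite intrM; ring.
    by rewrite hm subrr.
  by rewrite mulrn_eq0.
have -> : m%:~R + m%:~R = (2 * m)%:~R :> C by rewrite intrM; ring.
exact: exp_ipi_even.
Qed.

Lemma inv_if_exp_ipi (e : bool) (k : C) :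
  inv_if e (exp_ipi k) = exp_ipi ((-1) ^+ e * k).
Proof. by case: e; rewrite /= ?expr0 ?expr1 ?mul1r ?mulN1r ?exp_ipiN. Qed.

Lemma in_WallE (k1 k2 k3 k4 : C) :
  in_Wall k1 k2 k3 k4 <->
  in_expWall (exp_ipi k1) (exp_ipi k2) (exp_ipi k3) (- exp_ipi k4).
Proof.
have sqr k : is_int k <-> exp_ipi k ^+ 2 = 1 by split=> /exp_ipi_sqr_eq1.
have odd_sum (e2 e3 e4 : bool) :
  (exists m : int, k1 + (-1) ^+ e2 * k2 + (-1) ^+ e3 * k3 + (-1) ^+ e4 * k4
                   = (2 * m + 1)%:~R) <->
  exp_ipi k1 * inv_if e2 (exp_ipi k2) * inv_if e3 (exp_ipi k3)
    * inv_if e4 (- exp_ipi k4) = 1.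
  rewrite inv_ifN !inv_if_exp_ipi mulrN -!exp_ipiD.
  split=> [/exp_ipi_eqN1 ->|/eqP]; first by rewrite opprK.
  by rewrite eqr_oppLR => /eqP /exp_ipi_eqN1.
have walls : (exists (e2 e3 e4 : bool) (m : int),
    k1 + (-1) ^+ e2 * k2 + (-1) ^+ e3 * k3 + (-1) ^+ e4 * k4 = (2 * m + 1)%:~R)
  <-> exists e2 e3 e4 : bool, exp_ipi k1 * inv_if e2 (exp_ipi k2)
        * inv_if e3 (exp_ipi k3) * inv_if e4 (- exp_ipi k4) = 1.
  by split=> -[e2 [e3 [e4 /odd_sum h]]]; exists e2, e3, e4.
rewrite /in_Wall /in_expWall sqrrN.
by move: (sqr k1) (sqr k2) (sqr k3) (sqr k4) walls; tauto.
Qed.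

End ExpIPi.

Section ProjectiveCubic.
Variable R : realType.
Local Notation C := R[i].

Definition pt4 (x0 x1 x2 x3 : C) (i : 'I_4) : C :=
  nth 0 [:: x0; x1; x2; x3] i.

Lemma pt4_eta (x : 'I_4 -> C) :
  x = pt4 (x (inord 0)) (x (inord 1)) (x (inord 2)) (x (inord 3)).
Proof. by apply: boolp.funext; apply: ord4_ind; rewrite /pt4 inordK. Qed.

Lemma pt4_eq0 (x0 x1 x2 x3 : C) :
  pt4 x0 x1 x2 x3 = (fun=> 0) <-> [/\ x0 = 0, x1 = 0, x2 = 0 & x3 = 0].
Proof.
split=> [x_eq0 | [-> -> -> ->]].
  have coord j : (j < 4)%N -> nth 0 [:: x0; x1; x2; x3] j = 0.
    by move=> lt_j4; rewrite -(inordK lt_j4) -/(pt4 _ _ _ _ _) x_eq0.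
  by split; [exact: (coord 0%N) | exact: (coord 1%N)
           | exact: (coord 2%N) | exact: (coord 3%N)].
by apply: boolp.funext; apply: ord4_ind; rewrite /pt4 inordK.
Qed.

Lemma meval_Fcubic (t1 t2 t3 t4 x0 x1 x2 x3 : C) :
  (Fcubic t1 t2 t3 t4).@[pt4 x0 x1 x2 x3] =
  x1 * x2 * x3 + x0 * (x1 ^+ 2 + x2 ^+ 2 + x3 ^+ 2)
  - x0 ^+ 2 * (t1 * x1 + t2 * x2 + t3 * x3) + t4 * x0 ^+ 3.
Proof.
rewrite /Fcubic /Xc.
rewrite !(mevalD, mevalB, mevalN, mevalM, mevalC, mevalXU, rmorphXn).
by rewrite /pt4 !inordK //=; ring.
Qed.

Definition Fcubic_grad (t1 t2 t3 t4 : C) (x : 'I_4 -> C) (j : nat) : C :=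
  (mderiv (inord j) (Fcubic t1 t2 t3 t4)).@[x].

(* [d] is the [j]-th basis vector, so the right-hand side is the product rule
   for d/dX_j. *)
Lemma Fcubic_gradE (t1 t2 t3 t4 : C) (x : 'I_4 -> C) (j : nat) :
  (j < 4)%N ->
  let x0 := x (inord 0) in let x1 := x (inord 1) in
  let x2 := x (inord 2) in let x3 := x (inord 3) in
  let d k := ((k == j)%:R : C) in
  Fcubic_grad t1 t2 t3 t4 x j =
  d 1%N * x2 * x3 + x1 * d 2%N * x3 + x1 * x2 * d 3%N
  + d 0%N * (x1 ^+ 2 + x2 ^+ 2 + x3 ^+ 2)
  + x0 * (2 * x1 * d 1%N + 2 * x2 * d 2%N + 2 * x3 * d 3%N)
  - 2 * x0 * d 0%N * (t1 * x1 + t2 * x2 + t3 * x3)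
  - x0 ^+ 2 * (t1 * d 1%N + t2 * d 2%N + t3 * d 3%N) + 3 * t4 * x0 ^+ 2 * d 0%N.
Proof.
move=> lt_j4; rewrite /Fcubic_grad /Fcubic /Xc !exprS !expr0 !mulr1.
rewrite !(mderivD, mderivB, mderivN, mderivM, mderivXU, mderivC).
rewrite !(mevalD, mevalB, mevalN, mevalM, mevalC, mevalXU, meval0).
by rewrite -!val_eqE /= !inordK //=; ring.
Qed.

Lemma Fcubic_grad_pt4 (t1 t2 t3 t4 x0 x1 x2 x3 : C) :
  let D := Fcubic_grad t1 t2 t3 t4 (pt4 x0 x1 x2 x3) in
  [/\ D 0%N = x1 ^+ 2 + x2 ^+ 2 + x3 ^+ 2
              - 2 * x0 * (t1 * x1 + t2 * x2 + t3 * x3) + 3 * t4 * x0 ^+ 2,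
      D 1%N = x2 * x3 + 2 * x0 * x1 - t1 * x0 ^+ 2,
      D 2%N = x1 * x3 + 2 * x0 * x2 - t2 * x0 ^+ 2 &
      D 3%N = x1 * x2 + 2 * x0 * x3 - t3 * x0 ^+ 2].
Proof. by split; rewrite Fcubic_gradE //= /pt4 !inordK //=; ring. Qed.

Lemma Fcubic_Euler (t1 t2 t3 t4 x0 x1 x2 x3 : C) :
  let D := Fcubic_grad t1 t2 t3 t4 (pt4 x0 x1 x2 x3) in
  3 * (Fcubic t1 t2 t3 t4).@[pt4 x0 x1 x2 x3] =
  x0 * D 0%N + x1 * D 1%N + x2 * D 2%N + x3 * D 3%N.
Proof.
move=> D; rewrite /D.
have [-> -> -> ->] := Fcubic_grad_pt4 t1 t2 t3 t4 x0 x1 x2 x3.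
by rewrite meval_Fcubic; ring.
Qed.

Lemma singular_pt4E (t1 t2 t3 t4 x0 x1 x2 x3 : C) :
  singular_point t1 t2 t3 t4 (pt4 x0 x1 x2 x3) <->
  [/\ ~ [/\ x0 = 0, x1 = 0, x2 = 0 & x3 = 0],
      x1 ^+ 2 + x2 ^+ 2 + x3 ^+ 2
        - 2 * x0 * (t1 * x1 + t2 * x2 + t3 * x3) + 3 * t4 * x0 ^+ 2 = 0,
      x2 * x3 + 2 * x0 * x1 - t1 * x0 ^+ 2 = 0,
      x1 * x3 + 2 * x0 * x2 - t2 * x0 ^+ 2 = 0 &
      x1 * x2 + 2 * x0 * x3 - t3 * x0 ^+ 2 = 0].
Proof.
have [D0 D1 D2 D3] := Fcubic_grad_pt4 t1 t2 t3 t4 x0 x1 x2 x3.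
have := Fcubic_Euler t1 t2 t3 t4 x0 x1 x2 x3; rewrite /= D0 D1 D2 D3 => Euler.
rewrite /singular_point pt4_eq0.
split=> [[nz [_ D]] | [nz e0 e1 e2 e3]].
  split=> //; [rewrite -D0 | rewrite -D1 | rewrite -D2 | rewrite -D3];
    exact: D.
split=> //; split.
  apply: (mulfI (_ : (3 : C) != 0)); first by rewrite pnatr_eq0.
  by rewrite Euler e0 e1 e2 e3; ring.
by apply: ord4_ind; rewrite -/(Fcubic_grad _ _ _ _ _ _) ?D0 ?D1 ?D2 ?D3.
Qed.

Lemma singular_pt4_x0 (t1 t2 t3 t4 x0 x1 x2 x3 : C) :
  singular_point t1 t2 t3 t4 (pt4 x0 x1 x2 x3) -> x0 != 0.
Proof.
case/singular_pt4E => nz e0 e1 e2 e3; apply/eqP => x00; apply: nz.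
move: e0 e1 e2 e3; rewrite x00 !(mul0r, mulr0, expr0n, subr0, addr0) /=.
move=> s bc ac ab.
by have [-> -> ->] := pairwise_mul_sqr_sum_eq0 ab ac bc s.
Qed.

Lemma critical_thetaE (t1 t2 t3 t4 y1 y2 y3 : C) :
  (t1, t2, t3, t4) = critical_theta y1 y2 y3 <->
  [/\ y1 ^+ 2 + y2 ^+ 2 + y3 ^+ 2 - 2 * (t1 * y1 + t2 * y2 + t3 * y3)
        + 3 * t4 = 0,
      y2 * y3 + 2 * y1 - t1 = 0,
      y1 * y3 + 2 * y2 - t2 = 0 &
      y1 * y2 + 2 * y3 - t3 = 0].
Proof.
split=> [[-> -> -> ->] | [g0 g1 g2 g3]]; first by split; ring.
move: g0; rewrite -(subr0_eq g1) -(subr0_eq g2) -(subr0_eq g3) => g0.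
congr (_, _, _, _).
apply: (mulfI (_ : (3 : C) != 0)); first by rewrite pnatr_eq0.
by apply/eqP; rewrite -subr_eq0 -g0; apply/eqP; ring.
Qed.

Lemma singular_pt4_critical {t1 t2 t3 t4 x0 y1 y2 y3 : C} : x0 != 0 ->
  singular_point t1 t2 t3 t4 (pt4 x0 (x0 * y1) (x0 * y2) (x0 * y3)) <->
  (t1, t2, t3, t4) = critical_theta y1 y2 y3.
Proof.
move=> nx0; have n2 : x0 ^+ 2 != 0 by rewrite expf_neq0.
rewrite singular_pt4E critical_thetaE.
split=> [[_ e0 e1 e2 e3] | [g0 g1 g2 g3]].
  by split; apply: (mulfI n2); rewrite mulr0;
    [rewrite -e0 | rewrite -e1 | rewrite -e2 | rewrite -e3]; ring.
split; first by case=> /eqP; rewrite (negbTE nx0).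
all: rewrite -(mulr0 (x0 ^+ 2)).
- by rewrite -g0; ring.
- by rewrite -g1; ring.
- by rewrite -g2; ring.
- by rewrite -g3; ring.
Qed.

Lemma smooth_everywhereE (t1 t2 t3 t4 : C) :
  smooth_everywhere t1 t2 t3 t4 <->
  ~ exists y1 y2 y3, (t1, t2, t3, t4) = critical_theta y1 y2 y3.
Proof.
split=> [smooth [y1 [y2 [y3 crit]]] | ncrit x].
  apply: (smooth (pt4 1 y1 y2 y3)); rewrite -[y1]mul1r -[y2]mul1r -[y3]mul1r.
  exact/(singular_pt4_critical (oner_neq0 C)).
rewrite [x]pt4_eta => sx; have nx0 := singular_pt4_x0 sx; apply: ncrit.
move: nx0 sx; set x0 := x (inord 0) => nx0 sx.
exists (x (inord 1) / x0), (x (inord 2) / x0), (x (inord 3) / x0).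
by apply/(singular_pt4_critical nx0); rewrite ![x0 * _]mulrC !divfK.
Qed.

End ProjectiveCubic.

Theorem lemma5p2 (R : realType) :
  (forall t1 t2 t3 t4 : R[i], smooth_near_L t1 t2 t3 t4) /\
  (forall k0 k1 k2 k3 k4 : R[i], in_K k0 k1 k2 k3 k4 ->
     let '(t1, t2, t3, t4) := rh k1 k2 k3 k4 in
     (smooth_everywhere t1 t2 t3 t4 <-> ~ in_Wall k1 k2 k3 k4)).
Proof.
split=> [t1 t2 t3 t4 x [x0 _] | k0 k1 k2 k3 k4 _].
  by rewrite [x]pt4_eta x0 => /singular_pt4_x0; rewrite eqxx.
have -> : rh k1 k2 k3 k4 =
    theta_of (exp_ipi k1 + (exp_ipi k1)^-1) (exp_ipi k2 + (exp_ipi k2)^-1)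
      (exp_ipi k3 + (exp_ipi k3)^-1) (- exp_ipi k4 + (- exp_ipi k4)^-1).
  by rewrite /rh !rh_aE invrN -opprD.
case E : theta_of => [[[t1 t2] t3] t4].
have n4 : - exp_ipi k4 != 0 by rewrite oppr_eq0 exp_ipi_neq0.
have := critical_theta_expWallE (exp_ipi_neq0 k1) (exp_ipi_neq0 k2)
  (exp_ipi_neq0 k3) n4.
rewrite E => crit_wall.
move: (smooth_everywhereE t1 t2 t3 t4) (in_WallE k1 k2 k3 k4) crit_wall.
tauto.
Qed.
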